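(* There exist instances (a graph with fixed nonnegative embedding weights, features and binary labels) for which the gap between (i) the best accuracy achievable by a linear graph-based classifier on non-strategic data and (ii) the best accuracy achievable by a linear graph-based classifier on strategic data is at least $30\%$ (i.e., at least $0.3$ in accuracy).
   Context: Users $i\in[n]$ have features $x_i\in\mathbb{R}^\ell$ and labels $y_i\in\{\pm1\}$; embeddings $\phi(x_i;x_{-i})=\widetilde{w}_{ii}x_i+\sum_{j\neq i}\widetilde{w}_{ji}x_j$ with fixed $\widetilde{w}_{ji}\ge0$. Classifiers: $h_{\theta,b}(x_i;x_{-i})=\mathrm{sign}(\theta^\top\phi(x_i;x_{-i})+b)$, $\mathrm{sign}(0)=+1$, over all $\theta\in\mathbb{R}^\ell,b\in\mathbb{R}$. Cost $c(x,x')=\|x-x'\|_2$. Strategic data: users respond to $h$ by myopic best-response dynamics ($x_i^{(0)}=x_i$; at each round all users update concurrently; user $i$ changes her features only if currently classified $-1$ and some $x'$ with $h(x';x_{-i})=+1$, with others' current features, has cost $\le 2$, in which case she moves to the minimum-cost such point), run until convergence, yielding $x^h$. Non-strategic accuracy of $h$: $\frac1n|\{i:h(x_i;x_{-i})=y_i\}|$; strategic accuracy: $\frac1n|\{i:h(x^h_i;x^h_{-i})=y_i\}|$. *)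

From HB Require Import structures.
From mathcomp Require Import all_boot all_order all_algebra.
From mathcomp Require Import reals Rstruct.
From Stdlib Require Import Rdefinitions.
Set Implicit Arguments. Unset Strict Implicit. Unset Printing Implicit Defensive.
Import Order.TTheory GRing.Theory Num.Theory.
Local Open Scope ring_scope.

Definition vec (l : nat) := 'I_l -> R.
Definition profile (n l : nat) := 'I_n -> vec l.

Definition dot (l : nat) (u v : vec l) : R := \sum_(k < l) u k * v k.
Definition cost (l : nat) (u v : vec l) : R :=
  Num.sqrt (\sum_(k < l) (u k - v k) ^+ 2).

(* w j i = \tilde w_{ji}; embedding phi(x_i; x_{-i}) = sum_j w_{ji} x_j
   (the j = i term is \tilde w_{ii} x_i) *)
Definition embed (n l : nat) (w : 'I_n -> 'I_n -> R) (X : profile n l) (i : 'I_n)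
  : vec l := fun k => \sum_(j < n) w j i * X j k.

(* h_{theta,b}(x_i; x_{-i}) = +1  iff  theta^T phi + b >= 0  (sign 0 = +1);
   the prediction is encoded as a bool: true = +1, false = -1 *)
Definition classify (n l : nat) (w : 'I_n -> 'I_n -> R) (theta : vec l) (b : R)
  (X : profile n l) (i : 'I_n) : bool :=
  0 <= dot theta (embed w X i) + b.

Definition upd (n l : nat) (X : profile n l) (i : 'I_n) (z : vec l) : profile n l :=
  fun j => if j == i then z else X j.

Definition best_resp (n l : nat) (w : 'I_n -> 'I_n -> R) (theta : vec l) (b : R)
  (X : profile n l) (i : 'I_n) (z : vec l) : Prop :=
  classify w theta b (upd X i z) i /\
  forall z', classify w theta b (upd X i z') i -> cost (X i) z <= cost (X i) z'.

(* one round of concurrent myopic best responses with budget 2 *)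
Definition can_move (n l : nat) (w : 'I_n -> 'I_n -> R) (theta : vec l) (b : R)
  (X : profile n l) (i : 'I_n) : Prop :=
  ~~ classify w theta b X i /\
  exists z : vec l, classify w theta b (upd X i z) i /\ cost (X i) z <= 2.

Definition br_step (n l : nat) (w : 'I_n -> 'I_n -> R) (theta : vec l) (b : R)
  (X X' : profile n l) : Prop :=
  forall i : 'I_n,
    (can_move w theta b X i -> best_resp w theta b X i (X' i)) /\
    (~ can_move w theta b X i -> X' i = X i).

Definition strat_outcome (n l : nat) (w : 'I_n -> 'I_n -> R) (theta : vec l) (b : R)
  (x xs : profile n l) : Prop :=
  exists traj : nat -> profile n l,
    traj 0%N = x /\
    (forall t, br_step w theta b (traj t) (traj t.+1)) /\
    exists T : nat, forall t : nat, leq T t -> traj t = xs.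

Definition accuracy (n l : nat) (w : 'I_n -> 'I_n -> R) (theta : vec l) (b : R)
  (y : 'I_n -> bool) (X : profile n l) : R :=
  (#|[set i : 'I_n | classify w theta b X i == y i]|)%:R / n%:R.

From mathcomp Require Import all_boot all_order all_algebra.
From mathcomp Require Import reals Rstruct.
From Stdlib Require Import Rdefinitions Classical FunctionalExtensionality.
From mathcomp Require Import ring lra.
Set Implicit Arguments. Unset Strict Implicit. Unset Printing Implicit Defensive.
Import Order.TTheory GRing.Theory Num.Theory.
Local Open Scope ring_scope.

(* Take three users on the line: [mover] with feature 0, whose embedding is her
   own feature, and [plus] (label +1, feature 1) and [minus] (label -1,
   feature -1), whose embeddings are each other's features.  Without strategic
   behaviour, theta = -1 and b = -1/2 classify all three correctly.  With it,
   [plus] and [minus] never move, as their own features do not enter their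
   embeddings.  A classifier that labels [plus] positive and [mover] negative
   has b < 0 <= b - theta, so the point -1 is classified positive and lies at
   cost 1 from [mover]: she moves in the first round and, her embedding being
   her own feature, stays positive for ever.  So every classifier errs on some
   user strategically, and its strategic accuracy is at most 2/3. *)

Section Dynamics.
Variables (n l : nat) (w : 'I_n -> 'I_n -> R) (theta : vec l) (b : R).

Lemma embed_upd_no_self_weight (X : profile n l) i z :
  w i i = 0 -> embed w (upd X i z) i = embed w X i.
Proof.
move=> wii0; apply: functional_extensionality => k.
apply: eq_bigr => j _; rewrite /upd.
by case: eqP => [->|//]; rewrite wii0 !mul0r.
Qed.

Lemma cannot_move_no_self_weight (X : profile n l) i :
  w i i = 0 -> ~ can_move w theta b X i.
Proof.
move=> wii0 [neg [z [pos _]]].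
by move: pos neg; rewrite /classify embed_upd_no_self_weight // => ->.
Qed.

Definition isolated (i : 'I_n) := forall j, j != i -> w j i = 0.

Lemma classify_isolated (X X' : profile n l) i :
  isolated i -> X i = X' i -> classify w theta b X i = classify w theta b X' i.
Proof.
move=> iso eqXi; rewrite /classify; suff -> : embed w X i = embed w X' i by [].
apply: functional_extensionality => k; apply: eq_bigr => j _.
by have [->|/iso ->] := eqVneq j i; rewrite ?eqXi ?mul0r.
Qed.

Lemma br_step_refl (X : profile n l) :
  (forall i, ~ can_move w theta b X i) -> br_step w theta b X X.
Proof. by move=> still i; split=> // /still. Qed.

Lemma br_step_no_self_weight (X X' : profile n l) i :
  w i i = 0 -> br_step w theta b X X' -> X' i = X i.
Proof. by move=> wii0 /(_ i) [_]; apply; apply: cannot_move_no_self_weight. Qed.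

Lemma br_step_keeps_positive (X X' : profile n l) i :
  isolated i -> br_step w theta b X X' ->
  classify w theta b X i -> classify w theta b X' i.
Proof.
move=> iso /(_ i) [_ stay] pos.
have still : ~ can_move w theta b X i by case=> /negP.
by rewrite (classify_isolated iso (stay still)).
Qed.

Lemma br_step_mover_positive (X X' : profile n l) i :
  isolated i -> br_step w theta b X X' ->
  can_move w theta b X i -> classify w theta b X' i.
Proof.
move=> iso /(_ i) [move _] /move [pos _].
by rewrite -(@classify_isolated (upd X i (X' i)) X' i iso) // /upd eqxx.
Qed.

Lemma strat_outcome_of_steps (x x' : profile n l) :
  br_step w theta b x x' -> br_step w theta b x' x' ->
  strat_outcome w theta b x x'.
Proof.
move=> step1 step2; exists (fun t => if t is 0%nat then x else x').
by split=> //; split=> [[|t] //|]; exists 1%nat => -[].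
Qed.

Variables (traj : nat -> profile n l).
Hypothesis step : forall t, br_step w theta b (traj t) (traj t.+1).

Lemma traj_no_self_weight i t : w i i = 0 -> traj t i = traj 0%nat i.
Proof.
by move=> wii0; elim: t => // t <-; apply: br_step_no_self_weight (step t).
Qed.

Lemma traj_keeps_positive i (s t : nat) : isolated i -> leq s t ->
  classify w theta b (traj s) i -> classify w theta b (traj t) i.
Proof.
move=> iso; elim: t => [|t IH]; first by rewrite leqn0 => /eqP ->.
rewrite leq_eqVlt ltnS => /orP [/eqP -> //|/IH pos /pos].
exact: br_step_keeps_positive (step t).
Qed.

End Dynamics.

Section Accuracy.
Variables (n l : nat) (w : 'I_n -> 'I_n -> R) (theta : vec l) (b : R).
Variables (y : 'I_n -> bool) (X : profile n l).

Lemma accuracy_all_correct :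
  (0 < n)%nat -> (forall i, classify w theta b X i = y i) ->
  accuracy w theta b y X = 1.
Proof.
move=> n_gt0 correct; rewrite /accuracy RdivE.
have -> : [set i | classify w theta b X i == y i] = setT.
  by apply/setP => i; rewrite !inE correct eqxx.
by rewrite cardsT card_ord divff // pnatr_eq0 -lt0n.
Qed.

Lemma accuracy_le_one_miss i :
  classify w theta b X i != y i -> accuracy w theta b y X <= n.-1%:R / n%:R.
Proof.
move=> miss; rewrite /accuracy RdivE ler_pM2r ?invr_gt0 ?ltr0n; last first.
  exact: leq_ltn_trans (leq0n i) (ltn_ord i).
rewrite ler_nat.
have sub : [set j | classify w theta b X j == y j] \subset [set~ i].
  by apply/subsetP => j; rewrite !inE; apply: contraTneq => ->.
by rewrite (leq_trans (subset_leq_card sub)) // cardsC1 card_ord.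
Qed.

End Accuracy.

Lemma dot1 (u v : vec 1) : dot u v = u ord0 * v ord0.
Proof. by rewrite /dot big_ord1. Qed.

Lemma cost1 (u v : vec 1) : cost u v = `|u ord0 - v ord0|.
Proof. by rewrite /cost big_ord1 sqrtr_sqr. Qed.

Lemma halfline_nearest (F : realFieldType) (t c x0 z : F) :
  t * x0 + c < 0 -> 0 <= t * z + c -> `|x0 - - c / t| <= `|x0 - z|.
Proof.
move=> neg pos; have t_neq0 : t != 0.
  by apply: contraTneq pos => t0; move: neg; rewrite t0 !mul0r !add0r -ltNge.
have -> : x0 - - c / t = (t * x0 + c) / t by field.
rewrite normrM normfV ler_pdivrMr ?normr_gt0 // [X in _ <= X]mulrC -normrM.
rewrite mulrBr ltr0_norm // distrC (le_trans _ (ler_norm _)) //; lra.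
Qed.

Definition mover : 'I_3 := @Ordinal 3 0 isT.
Definition plus : 'I_3 := @Ordinal 3 1 isT.
Definition minus : 'I_3 := @Ordinal 3 2 isT.

Lemma user_cases (i : 'I_3) : [\/ i = mover, i = plus | i = minus].
Proof.
case: i => -[|[|[|//]]] ?; [apply: Or31 | apply: Or32 | apply: Or33];
  exact: val_inj.
Qed.

Definition partner (i : 'I_3) : 'I_3 :=
  match val i with 1 => minus | 2 => plus | _ => i end.

Lemma partner_mover : partner mover = mover.
Proof. by []. Qed.

Definition w_ex (j i : 'I_3) : R := (j == partner i)%:R.

Definition x_ex : profile 3 1 :=
  fun i _ => match val i with 1 => 1 | 2 => -1 | _ => 0 end.

Definition y_ex (i : 'I_3) : bool := val i == 1%nat.

Lemma w_ex_ge0 i j : 0 <= w_ex i j.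
Proof. exact: ler0n. Qed.

Lemma isolated_mover : isolated w_ex mover.
Proof. by move=> j /negbTE; rewrite /w_ex => ->. Qed.

Lemma only_mover_moves theta b (X : profile 3 1) i :
  can_move w_ex theta b X i -> i = mover.
Proof.
by case: (user_cases i) => -> // moves;
  case: (cannot_move_no_self_weight _ moves).
Qed.

Lemma classify_ex theta b (X : profile 3 1) i :
  classify w_ex theta b X i = (0 <= theta ord0 * X (partner i) ord0 + b).
Proof.
rewrite /classify dot1 /embed (bigD1 (partner i)) //= big1 => [|j /negbTE].
  by rewrite /w_ex eqxx mul1r addr0.
by rewrite /w_ex => ->; rewrite mul0r.
Qed.

Lemma strat_outcome_ex_exists theta b :
  exists xs, strat_outcome w_ex theta b x_ex xs.
Proof.
have [moves|still] := classic (can_move w_ex theta b x_ex mover); last first.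
  exists x_ex; apply: strat_outcome_of_steps;
    by apply: br_step_refl => i /[dup] /only_mover_moves ->.
have [neg [z [pos _]]] := moves.
move: neg pos; rewrite !classify_ex partner_mover /upd eqxx -ltNge mulr0 add0r.
move=> b_lt0 pos.
set t := theta ord0 in pos *.
have t_neq0 : t != 0 by apply: contraTneq pos => ->; rewrite mul0r add0r -ltNge.
pose boundary : vec 1 := fun _ => - b / t.
have boundary_pos : 0 <= t * boundary ord0 + b.
  by rewrite /boundary mulrC divfK // addNr.
exists (upd x_ex mover boundary); apply: strat_outcome_of_steps.
- move=> i; case: (user_cases i) => ->.
  + split=> // _; split=> [|z']; rewrite classify_ex partner_mover /upd eqxx //.
    by move=> pos'; rewrite !cost1 halfline_nearest // mulr0 add0r.
  + by split=> [/only_mover_moves|_].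
  + by split=> [/only_mover_moves|_].
- apply: br_step_refl => i /[dup] /only_mover_moves -> [+ _].
  by rewrite classify_ex partner_mover /upd eqxx boundary_pos.
Qed.

Lemma strat_outcome_ex_misclassifies theta b xs :
  strat_outcome w_ex theta b x_ex xs -> exists i, classify w_ex theta b xs i != y_ex i.
Proof.
move=> [traj [traj0 [step [T trajT]]]].
have [plus_pos|plus_neg] := boolP (classify w_ex theta b xs plus); last first.
  by exists plus; rewrite (negbTE plus_neg).
have [mover_pos|mover_neg] := boolP (classify w_ex theta b xs mover).
  by exists mover; rewrite mover_pos.
exfalso; have xsT : xs = traj T.+1 by rewrite trajT ?leqnSn.
have minus_frozen : traj T.+1 minus = x_ex minus.
  by rewrite (traj_no_self_weight step) ?traj0.
move: plus_pos; rewrite classify_ex xsT minus_frozen /x_ex /= => plus_pos.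
have never_pos s : leq s T.+1 -> ~~ classify w_ex theta b (traj s) mover.
  by move=> le_sT; apply: contra mover_neg; rewrite xsT;
    exact (traj_keeps_positive step isolated_mover le_sT).
have := never_pos 0%nat isT.
rewrite traj0 classify_ex partner_mover /= mulr0 add0r -ltNge => b_lt0.
have moves : can_move w_ex theta b (traj 0%nat) mover.
  rewrite traj0; split.
    by rewrite classify_ex partner_mover /= mulr0 add0r -ltNge.
  exists (fun _ => -1); rewrite classify_ex partner_mover cost1 /upd eqxx /=.
  by split=> //; rewrite sub0r opprK normr1; lra.
have := br_step_mover_positive isolated_mover (step 0%nat) moves.
by apply/negP/never_pos.
Qed.

Lemma classify_ex_correct (b0 : R) : -1 < b0 -> b0 < 0 ->
  forall i, classify w_ex (fun _ => -1) b0 x_ex i = y_ex i.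
Proof.
move=> b0_gtN1 b0_lt0 i; rewrite classify_ex.
case: (user_cases i) => ->; rewrite /x_ex /y_ex /partner /=.
- by apply/negbTE; rewrite -ltNge; lra.
- by rewrite eqxx; lra.
- by apply/negbTE; rewrite -ltNge; lra.
Qed.

Theorem proposition5 :
  exists (n l : nat) (w : 'I_n -> 'I_n -> R) (x : profile n l) (y : 'I_n -> bool),
    (forall i j : 'I_n, 0 <= w i j) /\
    (* the best-response dynamics converge for every linear classifier *)
    (forall (theta : vec l) (b : R), exists xs, strat_outcome w theta b x xs) /\
    (* some classifier's non-strategic accuracy exceeds every classifier's
       strategic accuracy by at least 0.3 *)
    exists (theta0 : vec l) (b0 : R),
      forall (theta : vec l) (b : R) (xs : profile n l),
        strat_outcome w theta b x xs ->
        accuracy w theta b y xs + 3 / 10 <= accuracy w theta0 b0 y x.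
Proof.
exists 3%nat, 1%nat, w_ex, x_ex, y_ex.
split; first exact: w_ex_ge0.
split; first exact: strat_outcome_ex_exists.
exists (fun _ => -1), (- 2^-1) => theta b xs outcome.
rewrite (accuracy_all_correct _ (classify_ex_correct _ _)) //; try lra.
have [i miss] := strat_outcome_ex_misclassifies outcome.
have : accuracy w_ex theta b y_ex xs <= 2 / 3 := accuracy_le_one_miss miss.
lra.
Qed.
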